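(* Let $Q$ be a right Leibniz algebra which is a weak algebra of quotients of its subalgebra $L$, and let $I$ be an ideal of $L$. If $\mathrm{Ann}_L(I)=\{0\}$ then $\mathrm{Ann}_Q(I)=\{0\}$, and if $\mathrm{ran}_L(I)=\{0\}$ then $\mathrm{ran}_Q(I)=\{0\}$.
   Context: A right Leibniz algebra satisfies $[x,[y,z]]=[[x,y],z]-[[x,z],y]$. Ideals of $L$: subspaces $I$ with $[I,L]\subseteq I$, $[L,I]\subseteq I$. For $X\in\{L,Q\}$: $\mathrm{ran}_X(I)=\{u\in X:[y,u]=0\ \forall y\in I\}$, $\mathrm{Ann}_X(I)=\{u\in X:[u,y]=[y,u]=0\ \forall y\in I\}$. $Q$ is a weak algebra of quotients of $L$ if for every $0\ne q\in Q$ there is $x\in L$ with $0\ne[q,x]\in L$ or $y\in L$ with $0\ne[y,q]\in L$. *)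

From mathcomp Require Import all_boot all_algebra.
Set Implicit Arguments. Unset Strict Implicit. Unset Printing Implicit Defensive.
Import GRing.Theory.
Local Open Scope ring_scope.

Definition bilinear_bracket (K : fieldType) (V : lmodType K) (br : V -> V -> V) :=
  (forall a x y z, br (a *: x + y) z = a *: br x z + br y z) /\
  (forall a x y z, br x (a *: y + z) = a *: br x y + br x z).

Definition right_leibniz (K : fieldType) (V : lmodType K) (br : V -> V -> V) :=
  bilinear_bracket br /\
  forall x y z, br x (br y z) = br (br x y) z - br (br x z) y.

Definition subspace (K : fieldType) (V : lmodType K) (S : V -> Prop) :=
  S 0 /\ (forall a x y, S x -> S y -> S (a *: x + y)).

Definition subalgebra (K : fieldType) (V : lmodType K) (br : V -> V -> V)
    (L : V -> Prop) :=
  subspace L /\ forall x y, L x -> L y -> L (br x y).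

Definition ideal_of (K : fieldType) (V : lmodType K) (br : V -> V -> V)
    (L I : V -> Prop) :=
  subspace I /\ (forall x, I x -> L x) /\
  (forall x y, I x -> L y -> I (br x y)) /\
  (forall x y, L x -> I y -> I (br x y)).

Definition ran (K : fieldType) (V : lmodType K) (br : V -> V -> V)
    (X I : V -> Prop) : V -> Prop :=
  fun u => X u /\ forall y, I y -> br y u = 0.

Definition Ann (K : fieldType) (V : lmodType K) (br : V -> V -> V)
    (X I : V -> Prop) : V -> Prop :=
  fun u => X u /\ forall y, I y -> br u y = 0 /\ br y u = 0.

(* Q (the whole space V) is a weak algebra of quotients of L. *)
Definition weak_algebra_of_quotients (K : fieldType) (V : lmodType K)
    (br : V -> V -> V) (L : V -> Prop) :=
  forall q : V, q != 0 ->
    (exists x, L x /\ br q x != 0 /\ L (br q x)) \/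
    (exists y, L y /\ br y q != 0 /\ L (br y q)).

Definition is_zero_set (K : fieldType) (V : lmodType K) (S : V -> Prop) :=
  forall u, S u -> u = 0.

(* Both annihilators ran_Q(I) and Ann_Q(I) are stable under bracketing with
   L on either side; this is the right Leibniz identity combined with
   [I,L] + [L,I] ⊆ I.  A nonzero element q of such a stable set would, by the
   weak quotient property, yield a nonzero element [q,x] or [x,q] of the set
   lying in L, i.e. a nonzero element of ran_L(I), resp. Ann_L(I). *)
From mathcomp Require Import all_boot all_algebra.
Set Implicit Arguments. Unset Strict Implicit. Unset Printing Implicit Defensive.
Import GRing.Theory.
Local Open Scope ring_scope.

Definition bracket_stable (K : fieldType) (V : lmodType K) (br : V -> V -> V)
    (L S : V -> Prop) :=
  forall u x, S u -> L x -> S (br u x) /\ S (br x u).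

Section Bracket.

Variables (K : fieldType) (Q : lmodType K) (br : Q -> Q -> Q).

Lemma bracket0l : bilinear_bracket br -> forall z, br 0 z = 0.
Proof.
move=> [brDl _] z; have /eqP := brDl 1 0 0 z; rewrite scaler0 addr0 scale1r.
by rewrite -[X in X == _]addr0 (inj_eq (addrI _)) eq_sym => /eqP.
Qed.

Lemma bracket0r : bilinear_bracket br -> forall z, br z 0 = 0.
Proof.
move=> [_ brDr] z; have /eqP := brDr 1 z 0 0; rewrite scaler0 addr0 scale1r.
by rewrite -[X in X == _]addr0 (inj_eq (addrI _)) eq_sym => /eqP.
Qed.

Lemma weak_quotient_stable_eq0 (L S : Q -> Prop) :
  weak_algebra_of_quotients br L -> bracket_stable br L S ->
  (forall u, L u -> S u -> u = 0) -> is_zero_set S.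
Proof.
move=> quotL stableS trivSL q Sq; case: (eqVneq q 0) => // /quotL.
case=> [[x [Lx [qx_neq0 L_qx]]] | [x [Lx [xq_neq0 L_xq]]]].
- by rewrite (trivSL _ L_qx (stableS _ _ Sq Lx).1) eqxx in qx_neq0.
- by rewrite (trivSL _ L_xq (stableS _ _ Sq Lx).2) eqxx in xq_neq0.
Qed.

Variables (L I : Q -> Prop).
Hypotheses (leibnizQ : right_leibniz br) (idealI : ideal_of br L I).

Let br0l := bracket0l leibnizQ.1.
Let br0r := bracket0r leibnizQ.1.

Lemma bracketA_leibniz x y z : br (br x y) z = br x (br y z) + br (br x z) y.
Proof. by rewrite leibnizQ.2 subrK. Qed.

Lemma ran_bracket_stable : bracket_stable br L (ran br (fun _ => True) I).
Proof.
have [_ [_ [IbrL _]]] := idealI.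
move=> u x [_ ranu] Lx; split; split=> // y Iy; rewrite leibnizQ.2.
- by rewrite (ranu _ Iy) br0l (ranu _ (IbrL _ _ Iy Lx)) subrr.
- by rewrite (ranu _ (IbrL _ _ Iy Lx)) (ranu _ Iy) br0l subrr.
Qed.

Lemma Ann_bracket_stable : bracket_stable br L (Ann br (fun _ => True) I).
Proof.
have [_ [_ [_ LbrI]]] := idealI.
have ran_stable := ran_bracket_stable.
move=> u x [_ annu] Lx.
have ranu : ran br (fun _ => True) I u by split=> // y /annu[].
have [[_ ran_ux] [_ ran_xu]] := ran_stable _ _ ranu Lx.
split; split=> // y Iy; split; rewrite ?ran_ux ?ran_xu // bracketA_leibniz.
- by rewrite (annu _ (LbrI _ _ Lx Iy)).1 (annu _ Iy).1 br0l addr0.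
- by rewrite (annu _ Iy).1 br0r (annu _ (LbrI _ _ Lx Iy)).2 addr0.
Qed.

End Bracket.

Theorem proposition3p11 (K : fieldType) (Q : lmodType K) (br : Q -> Q -> Q)
    (L I : Q -> Prop) :
  right_leibniz br ->
  subalgebra br L ->
  weak_algebra_of_quotients br L ->
  ideal_of br L I ->
  (is_zero_set (Ann br L I) -> is_zero_set (Ann br (fun _ => True) I)) /\
  (is_zero_set (ran br L I) -> is_zero_set (ran br (fun _ => True) I)).
Proof.
move=> leibnizQ _ quotL idealI; split=> trivL.
- apply: (weak_quotient_stable_eq0 quotL (Ann_bracket_stable leibnizQ idealI)).
  by move=> u Lu [_ annu]; apply: trivL.
- apply: (weak_quotient_stable_eq0 quotL (ran_bracket_stable leibnizQ idealI)).
  by move=> u Lu [_ ranu]; apply: trivL.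
Qed.
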